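(* Let $\mathbf x=(x_n)_{n\ge0}$ be a sequence over a finite alphabet $\mathcal A$, let $\mathcal A'$ be a proper subset of $\mathcal A$, and suppose there is a sequence $\mathbf y=(y_n)_{n\ge 0}$ over $\mathcal A'$ such that every prefix of $\mathbf y$ is a factor of $\mathbf x$. Let $d\ge 2$. If no sequence in the orbit closure of $\mathbf y$ under the shift is $d$-automatic, then $\mathbf x$ is not $d$-automatic.
   Context: The shift $S$ maps $(z_n)_{n\ge0}$ to $(z_{n+1})_{n\ge 0}$; the orbit closure of $\mathbf y$ is the closure of $\{S^n\mathbf y:n\ge0\}$ in the product topology. A factor of $\mathbf x$ is a finite block $x_ix_{i+1}\cdots x_j$. For $d\ge 2$, a sequence is $d$-automatic if it is the letter-to-letter image of a fixed point of a morphism all of whose letter-images have length $d$. *)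

From mathcomp Require Import all_boot.
Set Implicit Arguments. Unset Strict Implicit. Unset Printing Implicit Defensive.

Definition shift (T : Type) (z : nat -> T) : nat -> T := fun n => z n.+1.

Definition factor (T : Type) (x : nat -> T) (i m : nat) : seq T :=
  [seq x (i + k) | k <- iota 0 m].

Definition seq_prefix (T : Type) (y : nat -> T) (m : nat) : seq T := factor y 0 m.

Definition is_factor_of (T : Type) (w : seq T) (x : nat -> T) : Prop :=
  exists i, factor x i (size w) = w.

(* Orbit closure of y: closure of { S^n y : n >= 0 } in the product topology
   on T^N (T discrete).  A basic neighbourhood of z is the cylinder fixing
   z_0 .. z_{m-1}, so z is in the closure iff every such cylinder meets the
   orbit. *)
Definition in_orbit_closure (T : Type) (y z : nat -> T) : Prop :=
  forall m : nat, exists n : nat, forall k, k < m -> z k = iter n (@shift T) y k.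

(* d-automatic: letter-to-letter image (tau) of a fixed point w of a
   d-uniform morphism phi on a finite alphabet B.  w = phi(w) means
   w (d*n + j) = j-th letter of phi (w n) for all n and j < d. *)
Definition d_automatic (d : nat) (T : Type) (z : nat -> T) : Prop :=
  exists (B : finType) (phi : B -> d.-tuple B) (w : nat -> B) (tau : B -> T),
    (forall n (j : 'I_d), w (d * n + j) = tnth (phi (w n)) j) /\
    (forall n, z n = tau (w n)).

From mathcomp Require Import all_boot zify.
From Stdlib Require Import Classical.
Set Implicit Arguments. Unset Strict Implicit. Unset Printing Implicit Defensive.

(* Write x = tau o w with w a fixed point of a d-uniform morphism phi on a
   finite alphabet B.  Cutting w into aligned blocks of length d^K, each block
   is phi^K of a letter of w; since y has arbitrarily long prefixes inside x,
   for every K some image tau(phi^K(b)) occurs in y.  Replacing b by the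
   first-letter orbit point iter #|B| first_letter b, which is periodic with
   period P = #|B|!, and using finiteness of B, one letter c with
   first_letter^P c = c has tau(phi^(P N)(c)) occurring in y for every N.
   The words phi^(P N)(c) are then prefixes of one another, so they define a
   limit sequence n |-> phi^(P (n+1))(c)_n; its tau-image is d-automatic (it is
   a letter-to-letter image of a fixed point of a d-uniform morphism on the
   alphabet of P-tuples of letters) and lies in the orbit closure of y,
   contradicting the hypothesis. *)

Section UniformMorphism.
Variables (B : finType) (d : nat) (phi : B -> d.-tuple B).
Hypothesis d_gt1 : 1 < d.
Let d_gt0 : 0 < d := ltnW d_gt1.

Definition image_letter (b : B) (j : nat) : B := nth b (phi b) j.
Definition first_letter (b : B) : B := image_letter b 0.

(* iter_letter k b n is the n-th letter of the word phi^k(b), for n < d^k. *)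
Fixpoint iter_letter (k : nat) (b : B) (n : nat) : B :=
  if k is k'.+1 then image_letter (iter_letter k' b (n %/ d)) (n %% d) else b.

Lemma iter_letterS k b n :
  iter_letter k.+1 b n = image_letter (iter_letter k b (n %/ d)) (n %% d).
Proof. by []. Qed.

Lemma ltn_exp_of_le n k : n <= k -> n < d ^ k.
Proof. by move=> le_nk; apply: leq_trans (ltn_expl n d_gt1) (leq_pexp2l _ le_nk). Qed.

Lemma iter_letterD k m b n :
  iter_letter (k + m) b n = iter_letter m (iter_letter k b (n %/ d ^ m)) (n %% d ^ m).
Proof.
elim: m n => [|m IH] n; first by rewrite addn0 expn0 divn1 modn1.
rewrite addnS /= IH expnS -divnMA.
have -> : n %% (d * d ^ m) %% d = n %% d by apply/modn_dvdm/dvdn_mulr.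
by rewrite modn_divl mulnC.
Qed.

Lemma iter_letter0 k b : iter_letter k b 0 = iter k first_letter b.
Proof. by elim: k => //= k IH; rewrite div0n mod0n IH. Qed.

Lemma iter_letter_prefix i k b n :
  n < d ^ k -> iter_letter (i + k) b n = iter_letter k (iter i first_letter b) n.
Proof. by move=> lt_n; rewrite iter_letterD divn_small // modn_small // iter_letter0. Qed.

Lemma iter_letter_periodic P c k k' n :
  0 < P -> iter P first_letter c = c -> k = k' %[mod P] ->
  n < d ^ k -> n < d ^ k' -> iter_letter k c n = iter_letter k' c n.
Proof.
move=> P_gt0 per_c.
have shift_t t m : n < d ^ m -> iter_letter (t * P + m) c n = iter_letter m c n.
  move=> lt_n; elim: t => [|t IH]; first by rewrite add0n.
  rewrite mulSn -addnA iter_letter_prefix ?per_c //.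
  exact: leq_trans lt_n (leq_pexp2l d_gt0 (leq_addl _ _)).
wlog le_kk' : k k' / k <= k' => [W|eq_kk' lt_k lt_k'].
  by case: (leqP k k') => [|/ltnW] le eq lt lt'; [apply: W | symmetry; apply: W].
have dvd_P : P %| k' - k by rewrite -eqn_mod_dvd // eq_kk'.
by rewrite -(subnK le_kk') -(divnK dvd_P) shift_t.
Qed.

Lemma fixed_point_blocks (w : nat -> B) :
  (forall n (j : 'I_d), w (d * n + j) = tnth (phi (w n)) j) ->
  forall K q r, r < d ^ K -> w (d ^ K * q + r) = iter_letter K (w q) r.
Proof.
move=> fix_w; elim=> [|K IH] q r lt_r.
  by move: lt_r; rewrite expn0 ltnS leqn0 => /eqP ->; rewrite mul1n addn0.
rewrite /= -IH; last by rewrite ltn_divLR // -expnSr.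
have -> : d ^ K.+1 * q + r = d * (d ^ K * q + r %/ d) + Ordinal (ltn_pmod r d_gt0).
  by rewrite /= {1}(divn_eq r d) expnS; nia.
by rewrite fix_w (tnth_nth (w (d ^ K * q + r %/ d))).
Qed.

(* For a letter c of first-letter period P, the limit of phi^(P N)(c) is
   d-automatic: the P consecutive iterates phi^(P (n+1) + i)(c)_n, i < P,
   form a letter of the alphabet {ffun 'I_P -> B}, and these letters form a
   fixed point of a d-uniform morphism on that alphabet. *)
Lemma limit_automatic (A : Type) (tau : B -> A) (c : B) (P : nat) :
  0 < P -> iter P first_letter c = c ->
  d_automatic d (fun n => tau (iter_letter (P * n.+1) c n)).
Proof.
case: P => // P' _ per_c; set P := P'.+1.
pose prev (i : 'I_P) : 'I_P := Ordinal (ltn_pmod (i + P') (ltn0Sn P')).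
exists {ffun 'I_P -> B}.
exists (fun g : {ffun 'I_P -> B} => [tuple [ffun i => image_letter (g (prev i)) j] | j < d]).
exists (fun n => [ffun i : 'I_P => iter_letter (P * n.+1 + i) c n]).
exists (fun g : {ffun 'I_P -> B} => tau (g ord0)).
split=> [n j|n]; last by rewrite ffunE /= addn0.
apply/ffunP => i; rewrite tnth_mktuple !ffunE.
have -> : P * (d * n + j).+1 + i = (P * (d * n + j) + (P' + i)).+1 by rewrite /P; nia.
rewrite iter_letterS [d * n]mulnC divnMDl // modnMDl divn_small // modn_small // addn0.
congr image_letter; apply: (iter_letter_periodic (ltn0Sn P') per_c).
- by rewrite ![P * _]mulnC !modnMDl /= modn_mod addnC.
- by apply: ltn_exp_of_le; rewrite /P; nia.
- by apply: ltn_exp_of_le; rewrite /P; nia.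
Qed.

End UniformMorphism.

(* Every point iter #|B| f b of a self-map f of a finite set lies on a cycle,
   whose length divides #|B|!. *)
Lemma iter_card_periodic (B : finType) (f : B -> B) b :
  iter (#|B|`!) f (iter #|B| f b) = iter #|B| f b.
Proof.
pose g (i : 'I_#|B|.+1) := iter i f b.
have /injectivePn[i [j ne_ij eq_g]] : ~~ injectiveb g.
  by apply/injectiveP => /leq_card; rewrite card_ord ltnn.
wlog lt_ij : i j ne_ij eq_g / i < j.
  move=> W; case: (ltngtP i j) => [|lt|eq]; first exact: W.
  - by apply: (W j i) => //; rewrite eq_sym.
  - by rewrite (val_inj eq) eqxx in ne_ij.
have le_j : j <= #|B| by rewrite -ltnS.
have le_i : i <= #|B| := ltnW (leq_trans lt_ij le_j).
have cycle_t t : iter (t * (j - i) + i) f b = iter i f b.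
  elim: t => [|t IH]; first by rewrite mul0n add0n.
  rewrite mulSn -addnA iterD IH -iterD subnK; last exact: ltnW.
  exact: esym eq_g.
have dvd_fact : j - i %| #|B|`!.
  by apply: dvdn_fact; rewrite subn_gt0 lt_ij (leq_trans (leq_subr i j) le_j).
have per_i : iter #|B|`! f (iter i f b) = iter i f b.
  by rewrite -iterD -(divnK dvd_fact) cycle_t.
have -> : iter #|B| f b = iter (#|B| - i) f (iter i f b) by rewrite -iterD subnK.
by rewrite -iterD addnC iterD per_i.
Qed.

Lemma finite_uniform_witness (B : finType) (Q : nat -> B -> Prop) :
  (forall N N' c, N <= N' -> Q N' c -> Q N c) ->
  (forall N, exists c, Q N c) -> exists c, forall N, Q N c.
Proof.
move=> antitone witness; apply: NNPP => no_uniform.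
have fails c : exists N, ~ Q N c.
  by apply: not_all_ex_not => all_N; apply: no_uniform; exists c.
have [M failM] : exists M, forall c, c \in enum B -> ~ Q M c.
  elim: (enum B) => [|a s [M failM]]; first by exists 0.
  have [N failN] := fails a.
  exists (maxn M N) => c; rewrite inE => /orP[/eqP -> | /failM fail_c] Qc.
  - exact: failN (antitone _ _ _ (leq_maxr M N) Qc).
  - exact: fail_c (antitone _ _ _ (leq_maxl M N) Qc).
by have [c Qc] := witness M; apply: failM c (mem_enum _ c) Qc.
Qed.

Lemma iter_shift (T : Type) (y : nat -> T) s k : iter s (@shift T) y k = y (s + k).
Proof. by elim: s k => //= s IH k; rewrite /shift IH addnS. Qed.

Definition occurs_in (T : Type) (u : nat -> T) (len : nat) (y : nat -> T) : Prop :=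
  exists s, forall r, r < len -> u r = y (s + r).

Lemma prefix_occurs (T : Type) (x y : nat -> T) m :
  is_factor_of (seq_prefix y m) x -> occurs_in y m x.
Proof.
move=> [i]; rewrite /seq_prefix /factor size_map size_iota => eq_fac.
exists i => k lt_k; have := congr1 (nth (x 0) ^~ k) eq_fac.
by rewrite !(nth_map 0) ?size_iota // nth_iota.
Qed.

Section AutomaticWithLongPrefixes.
Variables (A B : finType) (d : nat) (phi : B -> d.-tuple B).
Variables (w : nat -> B) (tau : B -> A) (x y : nat -> A).
Hypothesis d_gt1 : 1 < d.
Hypothesis fixed_w : forall n (j : 'I_d), w (d * n + j) = tnth (phi (w n)) j.
Hypothesis x_image : forall n, x n = tau (w n).
Hypothesis prefixes_in_x : forall m, is_factor_of (seq_prefix y m) x.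
Let d_gt0 : 0 < d := ltnW d_gt1.

(* The common first-letter period of the points iter #|B| first_letter b. *)
Let P := #|B|`!.
Let P_gt0 : 0 < P := fact_gt0 #|B|.

(* A prefix of y of length 2 d^K contains an aligned block of x of length d^K,
   which is the image of phi^K of a letter of w. *)
Lemma image_block_occurs K :
  exists b, occurs_in (fun r => tau (iter_letter phi K b r)) (d ^ K) y.
Proof.
have [i y_at_i] := prefix_occurs (prefixes_in_x (2 * d ^ K)).
have D_gt0 : 0 < d ^ K by rewrite expn_gt0 d_gt0.
have i_eq := divn_eq i (d ^ K); have i_mod := ltn_pmod i D_gt0.
exists (w (i %/ d ^ K).+1), (d ^ K * (i %/ d ^ K).+1 - i) => r lt_r.
rewrite y_at_i; last by nia.
have -> : i + (d ^ K * (i %/ d ^ K).+1 - i + r) = d ^ K * (i %/ d ^ K).+1 + r by nia.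
by rewrite x_image (fixed_point_blocks d_gt1 fixed_w).
Qed.

Definition periodic_image_occurs (N : nat) (c : B) : Prop :=
  iter P (first_letter phi) c = c /\
  occurs_in (fun r => tau (iter_letter phi (P * N) c r)) (d ^ (P * N)) y.

(* Moving from b to iter #|B| first_letter b keeps a prefix of phi^K(b) for
   K = #|B| + P N and reaches a P-periodic point. *)
Lemma periodic_image_exists N : exists c, periodic_image_occurs N c.
Proof.
have [b [s occ]] := image_block_occurs (#|B| + P * N).
exists (iter #|B| (first_letter phi) b); split; first exact: iter_card_periodic.
exists s => r lt_r; rewrite -iter_letter_prefix //; apply: occ.
exact: leq_trans lt_r (leq_pexp2l d_gt0 (leq_addl _ _)).
Qed.

(* phi^(P N)(c) is a prefix of phi^(P N')(c) for N <= N'. *)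
Lemma periodic_image_antitone N N' c :
  N <= N' -> periodic_image_occurs N' c -> periodic_image_occurs N c.
Proof.
move=> le_N [per_c [s occ]]; split=> //; exists s => r lt_r.
have lt_r' : r < d ^ (P * N') by rewrite (leq_trans lt_r) ?leq_pexp2l ?leq_mul2l ?le_N ?orbT.
rewrite -occ //; congr tau; apply: (iter_letter_periodic d_gt1 P_gt0 per_c) => //.
by rewrite !modnMr.
Qed.

(* If all images of phi^(P N)(c) occur in y, their limit lies in the orbit
   closure of y: its prefix of length m occurs in y at the position where the
   image of phi^(P m)(c) does. *)
Lemma limit_in_orbit_closure c :
  (forall N, periodic_image_occurs N c) ->
  in_orbit_closure y (fun n => tau (iter_letter phi (P * n.+1) c n)).
Proof.
move=> occ_all m; have [per_c [s occ]] := occ_all m; have P_pos := P_gt0.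
exists s => k lt_km; rewrite iter_shift -occ; last by apply: ltn_exp_of_le; nia.
congr tau; apply: (iter_letter_periodic d_gt1 P_gt0 per_c).
- by rewrite !modnMr.
- by apply: ltn_exp_of_le; nia.
- by apply: ltn_exp_of_le; nia.
Qed.

Lemma automatic_in_orbit_closure :
  exists z : nat -> A, in_orbit_closure y z /\ d_automatic d z.
Proof.
have [c occ_all] := finite_uniform_witness periodic_image_antitone periodic_image_exists.
have [per_c _] := occ_all 0.
exists (fun n => tau (iter_letter phi (P * n.+1) c n)); split.
- exact: limit_in_orbit_closure.
- exact: (limit_automatic d_gt1 tau P_gt0 per_c).
Qed.

End AutomaticWithLongPrefixes.

Theorem mainTheorem13 (A : finType) (A' : {set A}) (x y : nat -> A) (d : nat) :
  A' \proper [set: A] ->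
  (forall n, y n \in A') ->
  (forall m, is_factor_of (seq_prefix y m) x) ->
  2 <= d ->
  (forall z : nat -> A, in_orbit_closure y z -> ~ d_automatic d z) ->
  ~ d_automatic d x.
Proof.
move=> _ _ prefixes_in_x d_gt1 no_automatic [B [phi [w [tau [fixed_w x_image]]]]].
have [z [z_closure z_automatic]] :=
  automatic_in_orbit_closure d_gt1 fixed_w x_image prefixes_in_x.
exact: no_automatic z_closure z_automatic.
Qed.
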